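(* Let $G$ be an abelian group, $\underline{g}=(g_1,\dots,g_m)\in G^m$, and $\tilde{\underline{g}}=(g_1,\dots,g_m,g_m)\in G^{m+1}$. Let $S=\mathcal{B}(\underline{g})$ with the grading $S_d=\{\alpha\in\mathcal{B}(\underline{g})\mid\alpha_m=d\}$. Then $\mathcal{B}(\tilde{\underline{g}})\cong\tilde S$ as monoids.
   Context: $G$ is written multiplicatively. For $\underline{h}=(h_1,\dots,h_k)\in G^k$, $\mathcal{B}(\underline{h})=\{\alpha\in\mathbb{N}_0^k\mid\prod_i h_i^{\alpha_i}=1\}$, a submonoid of the additive monoid $\mathbb{N}_0^k$. For a graded monoid $S=\bigsqcup_d S_d$ (with $S_dS_e\subseteq S_{d+e}$, $|s|=d$ for $s\in S_d$), $\tilde S=\{s[i]\mid s\in S,\ 0\le i\le|s|\}$ with operation $s[i]\cdot t[j]=(s\cdot t)[i+j]$. *)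

From HB Require Import structures.
From mathcomp Require Import all_boot all_algebra.
Set Implicit Arguments. Unset Strict Implicit. Unset Printing Implicit Defensive.
Import GRing.Theory.
Local Open Scope ring_scope.

(* An abelian group G is rendered as a zmodType (written additively):
   prod_i h_i^{alpha_i} = 1 becomes sum_i alpha_i . h_i = 0. *)

Notation vecN k := {ffun 'I_k -> nat}.
Definition vaddN k (a b : vecN k) : vecN k := [ffun i => (a i + b i)%N].
Definition vzeroN k : vecN k := [ffun => 0%N].

Definition Bmon (G : zmodType) k (h : 'I_k -> G) : pred (vecN k) :=
  fun a => \sum_(i < k) h i *+ a i == 0.

(* tilde g = (g_1, ..., g_m, g_m) for g = (g_1,...,g_m), m = n.+1 *)
Definition dup_last (G : Type) n (g : 'I_n.+1 -> G) : 'I_n.+2 -> G :=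
  fun i => g (inord (minn i n)).

(* tilde S for a graded submonoid S (carrier predicate, operation, degree):
   pairs (s, i) with s in S and 0 <= i <= |s|, with
   (s,i)*(t,j) = (s*t, i+j) and unit (1, 0). *)
Definition tilde_carrier T (S : pred T) (deg : T -> nat) : pred (T * nat) :=
  fun p => (p.1 \in S) && (p.2 <= deg p.1)%N.
Definition tilde_op T (op : T -> T -> T) (p q : T * nat) : T * nat :=
  (op p.1 q.1, (p.2 + q.2)%N).
Definition tilde_unit T (e : T) : T * nat := (e, 0%N).

Definition is_monoid_iso T U (A : pred T) (opA : T -> T -> T) (eA : T)
  (B : pred U) (opB : U -> U -> U) (eB : U) (f : T -> U) : Prop :=
  [/\ {in A, forall x, f x \in B},
      {in A &, injective f},
      (forall y, y \in B -> exists2 x, x \in A & f x = y),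
      f eA = eB &
      {in A &, forall x y, f (opA x y) = opB (f x) (f y)}].

Definition monoid_isomorphic T U (A : pred T) (opA : T -> T -> T) (eA : T)
  (B : pred U) (opB : U -> U -> U) (eB : U) : Prop :=
  exists f : T -> U, is_monoid_iso A opA eA B opB eB f.

From mathcomp Require Import all_boot all_algebra.
Set Implicit Arguments. Unset Strict Implicit. Unset Printing Implicit Defensive.
Import GRing.Theory.

(* The isomorphism sends alpha = (alpha_1, ..., alpha_m, alpha_(m+1)) to
   (alpha_1, ..., alpha_(m-1), alpha_m + alpha_(m+1))[alpha_(m+1)].  Since the
   last two entries of g~ are both g_m, merging the last two coordinates does
   not change the weighted sum, so it maps B(g~) into B(g); the new last
   coordinate bounds alpha_(m+1), which records the splitting and makes the map
   invertible on exactly the pairs s[i] with i <= |s|. *)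

Section MergeLast.
Variable n : nat.

Definition merge_last (a : vecN n.+2) : vecN n.+1 :=
  [ffun i => a (lift ord_max i) + (if i == ord_max then a ord_max else 0)].

Definition split_last (b : vecN n.+1) (d : nat) : vecN n.+2 :=
  [ffun j => if unlift ord_max j is Some i
             then b i - (if i == ord_max then d else 0) else d].

Lemma merge_last_max (a : vecN n.+2) :
  merge_last a ord_max = a (lift ord_max ord_max) + a ord_max.
Proof. by rewrite ffunE eqxx. Qed.

Lemma merge_lastD (a b : vecN n.+2) :
  merge_last (vaddN a b) = vaddN (merge_last a) (merge_last b).
Proof.
by apply/ffunP => i; rewrite !ffunE; case: ifP => _; rewrite ?addn0 // addnACA.
Qed.

Lemma merge_last0 : merge_last (vzeroN n.+2) = vzeroN n.+1.
Proof. by apply/ffunP => i; rewrite !ffunE; case: ifP. Qed.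

Lemma split_last_max (b : vecN n.+1) (d : nat) : split_last b d ord_max = d.
Proof. by rewrite ffunE unlift_none. Qed.

Lemma merge_lastK (a : vecN n.+2) : split_last (merge_last a) (a ord_max) = a.
Proof.
apply/ffunP => j; rewrite ffunE.
by case: unliftP => [i ->|->] //; rewrite ffunE addnK.
Qed.

Lemma split_lastK (b : vecN n.+1) (d : nat) :
  d <= b ord_max -> merge_last (split_last b d) = b.
Proof.
move=> le_d_b; apply/ffunP => i; rewrite !ffunE liftK unlift_none.
by case: eqP => [->|_]; rewrite ?subnK ?subn0 ?addn0.
Qed.

End MergeLast.

Lemma dup_last_lift (G : Type) n (g : 'I_n.+1 -> G) (i : 'I_n.+1) :
  dup_last g (lift ord_max i) = g i.
Proof.
rewrite /dup_last lift_max (minn_idPl (leq_ord i)).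
by congr g; apply: val_inj; rewrite /= inordK.
Qed.

Lemma dup_last_max (G : Type) n (g : 'I_n.+1 -> G) :
  dup_last g ord_max = g ord_max.
Proof.
rewrite /dup_last /= (minn_idPr (leqnSn n)).
by congr g; apply: val_inj; rewrite /= inordK.
Qed.

Lemma sum_dup_last (G : nmodType) n (g : 'I_n.+1 -> G) (a : vecN n.+2) :
  (\sum_(i < n.+2) dup_last g i *+ a i
   = \sum_(i < n.+1) g i *+ merge_last a i)%R.
Proof.
rewrite (bigD1_ord ord_max) //= dup_last_max addrC.
under eq_bigr => i _ do rewrite dup_last_lift.
under [RHS]eq_bigr => i _ do rewrite ffunE mulrnDr.
rewrite big_split /=; congr (_ + _)%R.
rewrite (bigD1 ord_max) //= eqxx big1 ?addr0 // => i /negPf ->.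
exact: mulr0n.
Qed.

Lemma Bmon_dup_last (G : zmodType) n (g : 'I_n.+1 -> G) (a : vecN n.+2) :
  (a \in Bmon (dup_last g)) = (merge_last a \in Bmon g).
Proof. by rewrite /in_mem /= /Bmon sum_dup_last. Qed.

Theorem proposition4p6 (G : zmodType) (n : nat) (g : 'I_n.+1 -> G) :
  monoid_isomorphic
    (Bmon (dup_last g)) (@vaddN n.+2) (vzeroN n.+2)
    (tilde_carrier (Bmon g) (fun a : vecN n.+1 => a ord_max))
    (tilde_op (@vaddN n.+1)) (tilde_unit (vzeroN n.+1)).
Proof.
exists (fun a => (merge_last a, a ord_max)); split.
- move=> a Ba; apply/andP; split; first by rewrite -Bmon_dup_last.
  by rewrite /= merge_last_max leq_addl.
- move=> a b _ _ [eq_merge eq_max].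
  by rewrite -[a]merge_lastK -[b]merge_lastK eq_merge eq_max.
- case=> b d /andP [/= Bb le_d_b].
  exists (split_last b d); last by rewrite split_lastK // split_last_max.
  by rewrite Bmon_dup_last split_lastK.
- by rewrite merge_last0 ffunE.
- by move=> a b _ _; rewrite merge_lastD ffunE.
Qed.
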